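(* Let $n,g$ be integers with $1\leq g\leq \lfloor \frac{n-3}{2}\rfloor$, and let $T$ be a tree of order $n$ of type $T_n^*$ (with respect to $g$). Then $T$ has an $R_g$-cutset and $$\kappa_g(T)=n-2g-2.$$
   Context: All graphs are finite and simple. A tree $T$ of order $n$ is of type $T_n^*$ (with respect to $g$) if it contains a vertex $v$ such that $T-v$ has two connected components with exactly $g+1$ vertices each, and every other connected component of $T-v$ (there may be none) has at most $g$ vertices. Equivalently, $T$ is obtained from two trees $T',T''$ of order $g+1$ and trees $T_1,\ldots,T_r$ ($r\ge 0$) each of order at most $g$ with $\sum_i|V(T_i)|=n-2g-3$, by adding a new vertex $v$ and one edge from $v$ to each of $T',T'',T_1,\ldots,T_r$. A set $S\subseteq V(G)$ is a cutset if $G-S$ is disconnected. For a non-negative integer $g$, a cutset $S$ is an $R_g$-cutset if every connected component of $G-S$ has at least $g+1$ vertices. If $G$ has at least one $R_g$-cutset, the $g$-extra connectivity $\kappa_g(G)$ is the minimum cardinality of an $R_g$-cutset of $G$. *)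

From mathcomp Require Import all_boot.
Set Implicit Arguments. Unset Strict Implicit. Unset Printing Implicit Defensive.

Section Graphs.
Variable T : finType.

Definition simple_graph (e : rel T) : Prop := symmetric e /\ irreflexive e.

Definition del_rel (e : rel T) (S : {set T}) : rel T :=
  [rel x y | [&& x \notin S, y \notin S & e x y]].

(* vertex set of the connected component of G - S containing x (x \notin S) *)
Definition comp (e : rel T) (S : {set T}) (x : T) : {set T} :=
  [set y | connect (del_rel e S) x y].

Definition is_tree (e : rel T) : Prop :=
  (forall x y, connect e x y) /\
  ~ (exists c : seq T, [/\ uniq c, 2 < size c & cycle e c]).

Definition cutset (e : rel T) (S : {set T}) : bool :=
  [exists x, exists y, [&& x \notin S, y \notin S & ~~ connect (del_rel e S) x y]].

Definition Rg_cutset (g : nat) (e : rel T) (S : {set T}) : bool :=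
  cutset e S && [forall x, (x \notin S) ==> (g < #|comp e S x|)].

(* g-extra connectivity: minimum size of an R_g-cutset (meaningful when one exists) *)
Definition kappa (g : nat) (e : rel T) : nat :=
  \big[minn/#|T|]_(S : {set T} | Rg_cutset g e S) #|S|.

Definition type_Tstar (g : nat) (e : rel T) : Prop :=
  exists v a b : T,
    [/\ a != v, b != v, ~~ connect (del_rel e [set v]) a b,
        #|comp e [set v] a| = g.+1 /\ #|comp e [set v] b| = g.+1 &
        forall x, x != v -> x \notin comp e [set v] a -> x \notin comp e [set v] b ->
          #|comp e [set v] x| <= g].

End Graphs.

From Pilot Require Import Defs.
From HB Require Import structures.
From mathcomp Require Import all_boot.
Set Implicit Arguments. Unset Strict Implicit. Unset Printing Implicit Defensive.

(* Let v be the centre of the tree and A, B the two components of T - v with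
   g+1 vertices.  We show that S0 := V(T) \ (A u B), of size n - 2g - 2, is a
   minimum R_g-cutset.
   - S0 is an R_g-cutset: it contains v, and the components of T - S0 are
     exactly A and B.
   - Every R_g-cutset S contains v: otherwise a component K of T - S missing v
     would be strictly smaller than the component of T - v containing it
     (connectivity gives an edge from that component to v), so |K| <= g; hence
     every vertex outside S reaches v in T - S, and T - S is connected.
   - If v is in S, every component of T - S lies in a component of T - v, so
     a vertex outside S lies in a component of T - v of size > g, i.e. in A
     or B; thus V(T) \ S is contained in A u B, and |S| >= |S0|. *)

Section Components.
Variables (T : finType) (e : rel T).
Hypothesis sym_e : symmetric e.
Implicit Types (S K : {set T}) (x y u w : T).

Lemma del_rel_sym S : symmetric (del_rel e S).
Proof. by move=> x y; rewrite /del_rel /= sym_e andbCA. Qed.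

Lemma connect_del_sym S : connect_sym (del_rel e S).
Proof. exact/sym_connect_sym/del_rel_sym. Qed.

Lemma connect_del_notin S x y :
  x \notin S -> connect (del_rel e S) x y -> y \notin S.
Proof.
move=> xS /connectP [p]; elim: p x xS => [|z p IH] x xS /=; first by move=> _ ->.
by case/andP => /and3P [_ zS _]; apply: IH zS.
Qed.

Lemma comp_self S x : x \in Defs.comp e S x.
Proof. by rewrite inE connect0. Qed.

Lemma comp_eq S x y : y \in Defs.comp e S x -> Defs.comp e S y = Defs.comp e S x.
Proof.
rewrite inE => xy; apply/setP => z; rewrite !inE.
by apply: (same_connect (connect_del_sym S)); rewrite connect_del_sym.
Qed.

Lemma comp_disjoint S x y :
  ~~ connect (del_rel e S) x y -> [disjoint Defs.comp e S x & Defs.comp e S y].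
Proof.
move=> nxy; rewrite disjoints_subset; apply/subsetP => z; rewrite !inE => xz.
by apply: contra nxy => yz; rewrite (connect_trans xz) // connect_del_sym.
Qed.

Lemma comp_closed S x u w :
  x \notin S -> u \in Defs.comp e S x -> w \notin S -> e u w ->
  w \in Defs.comp e S x.
Proof.
rewrite !inE => xS xu wS euw; have uS := connect_del_notin xS xu.
by apply: connect_trans xu (connect1 _); rewrite /del_rel /= uS wS euw.
Qed.

Lemma comp_sub S S' x :
  [disjoint Defs.comp e S x & S'] -> Defs.comp e S x \subset Defs.comp e S' x.
Proof.
move=> KS'; apply/subsetP => y; rewrite !inE => /connectP [p pth ->].
have onK : all [in Defs.comp e S x] (x :: p).
  by apply/allP => z /(path_connect pth); rewrite inE.
apply/connectP; exists p => //; apply: sub_in_path onK pth => u w uK wK.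
rewrite /del_rel /= => /and3P [_ _ euw].
by rewrite euw (disjointFr KS' uK) (disjointFr KS' wK).
Qed.

Lemma comp_notin S x y : x \notin S -> y \in S -> y \notin Defs.comp e S x.
Proof. by move=> xS yS; rewrite inE; apply: contraL yS; apply: connect_del_notin. Qed.

Lemma comp_avoid S x : x \notin S -> [disjoint Defs.comp e S x & S].
Proof.
move=> xS; rewrite disjoint_sym disjoints_subset; apply/subsetP => y yS.
by rewrite inE comp_notin.
Qed.

Lemma comp_mono S S' x :
  x \notin S -> S' \subset S -> Defs.comp e S x \subset Defs.comp e S' x.
Proof. by move=> xS S'S; apply/comp_sub/(disjointWr S'S)/comp_avoid. Qed.

Lemma exit_edge K x y :
  connect e x y -> x \in K -> y \notin K ->
  exists u w, [/\ u \in K, w \notin K & e u w].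
Proof.
move=> /connectP [p]; elim: p x => [|z p IH] x /=; first by move=> _ -> ->.
case/andP => exz pth ey xK yK.
by case: (boolP (z \in K)) => zK; [apply: IH zK yK | exists x, z].
Qed.

Lemma comp_proper S v x :
  (forall x y, connect e x y) -> v \notin S -> x \notin S ->
  v \notin Defs.comp e S x -> Defs.comp e S x \proper Defs.comp e [set v] x.
Proof.
move=> conn vS xS vK.
have xv : x \notin [set v].
  by rewrite inE; apply: contraNneq vK => <-; apply: comp_self.
have sub : Defs.comp e S x \subset Defs.comp e [set v] x.
  by apply: comp_sub; rewrite disjoint_sym disjoints1.
rewrite properEneq sub andbT; apply/eqP => KE.
have vKv : v \notin Defs.comp e [set v] x.
  by rewrite comp_notin ?set11.
have [u [w [uK wK euw]]] := exit_edge (conn x v) (comp_self _ _) vKv.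
have [wv|wv] := eqVneq w v.
  rewrite -KE in uK; rewrite wv in euw.
  by case/negP: vK; apply: comp_closed euw.
by case/negP: wK; apply: comp_closed euw; rewrite // inE.
Qed.

End Components.

(* minn is associative and commutative, so big minima can be split (bigD1) *)
HB.instance Definition _ := SemiGroup.isComLaw.Build nat minn minnA minnC.

Lemma kappa_min (T : finType) (g : nat) (e : rel T) (S0 : {set T}) :
  Rg_cutset g e S0 -> (forall S, Rg_cutset g e S -> #|S0| <= #|S|) ->
  kappa g e = #|S0|.
Proof.
move=> RS0 minS0; apply/eqP; rewrite eqn_leq; apply/andP; split.
  by rewrite /kappa (bigD1 S0) //= geq_minl.
apply: (big_ind (fun k => #|S0| <= k)) => [|k l|S RS]; first exact: max_card.
  by rewrite leq_min => -> ->.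
exact: minS0.
Qed.

Section TypeTstar.
Variables (T : finType) (e : rel T) (g : nat) (v a b : T).
Hypothesis sym_e : symmetric e.
Hypothesis conn : forall x y, connect e x y.
Hypotheses (av : a != v) (bv : b != v).
Hypothesis nab : ~~ connect (del_rel e [set v]) a b.
Hypotheses (cardA : #|Defs.comp e [set v] a| = g.+1)
           (cardB : #|Defs.comp e [set v] b| = g.+1).
Hypothesis small : forall x, x != v ->
  x \notin Defs.comp e [set v] a -> x \notin Defs.comp e [set v] b ->
  #|Defs.comp e [set v] x| <= g.

Let A := Defs.comp e [set v] a.
Let B := Defs.comp e [set v] b.

Let S0 := ~: (A :|: B).

Lemma comp_v_AB x : x \in A :|: B ->
  Defs.comp e [set v] x \subset A :|: B /\ #|Defs.comp e [set v] x| = g.+1.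
Proof.
case/setUP => /(comp_eq sym_e) ->; split=> //; [exact: subsetUl | exact: subsetUr].
Qed.

Lemma comp_v_le x : x != v -> #|Defs.comp e [set v] x| <= g.+1.
Proof.
move=> xv; case: (boolP (x \in A :|: B)) => [/comp_v_AB [_ ->] // |].
by rewrite in_setU negb_or => /andP [xA xB]; apply/ltnW/small.
Qed.

Lemma comp_v_large x :
  x != v -> g < #|Defs.comp e [set v] x| -> x \in A :|: B.
Proof.
move=> xv; apply: contraTT; rewrite in_setU negb_or => /andP [xA xB].
by rewrite -leqNgt small.
Qed.

Lemma v_in_S0 : v \in S0.
Proof.
by rewrite in_setC in_setU negb_or !comp_notin ?inE ?av ?bv.
Qed.

Lemma card_S0 : #|S0| = #|T| - 2 * g - 2.
Proof.
have cardAB : #|A :|: B| = 2 * g + 2.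
  have AB0 : A :&: B = set0 by apply/disjoint_setI0/comp_disjoint.
  have := cardsUI A B; rewrite AB0 cards0 addn0 cardA cardB => ->.
  by rewrite addSn addnS mul2n -addnn addn2.
by rewrite -(cardsC (A :|: B)) cardAB -subnDA addKn.
Qed.

(* S0 separates a from b, and the components of T - S0 contain A or B *)
Lemma Rg_cutset_S0 : Rg_cutset g e S0.
Proof.
have aS0 : a \notin S0 by rewrite in_setC negbK in_setU comp_self.
have bS0 : b \notin S0 by rewrite in_setC negbK in_setU comp_self orbT.
apply/andP; split.
  apply/existsP; exists a; apply/existsP; exists b; rewrite aS0 bS0 /=.
  apply: contra nab => ab.
  have vS0 : [set v] \subset S0 by rewrite sub1set v_in_S0.
  by have := subsetP (comp_mono e aS0 vS0) b; rewrite !inE; apply.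
apply/forallP => x; apply/implyP; rewrite in_setC negbK => xAB.
have [sub card] := comp_v_AB xAB.
rewrite -card; apply/subset_leq_card/comp_sub.
by rewrite -subsets_disjoint.
Qed.

Lemma Rg_cutset_centre S : Rg_cutset g e S -> v \in S.
Proof.
case/andP => /existsP [x0 /existsP [y0 /and3P [x0S y0S nx0y0]]] /forallP large.
apply/negPn/negP => vS; case/negP: nx0y0.
have to_v x : x \notin S -> connect (del_rel e S) x v.
  move=> xS; apply: contraLR (implyP (large x) xS) => nxv.
  have vK : v \notin Defs.comp e S x by rewrite inE.
  have xv : x != v by apply: contraNneq vK => <-; apply: comp_self.
  have lt_K := proper_card (comp_proper conn vS xS vK).
  by rewrite -leqNgt -ltnS (leq_trans lt_K) ?comp_v_le.
by rewrite (connect_trans (to_v _ x0S)) // connect_del_sym // to_v.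
Qed.

Lemma S0_sub_Rg_cutset S : Rg_cutset g e S -> S0 \subset S.
Proof.
move=> RS; have vS := Rg_cutset_centre RS.
rewrite -setCS /S0 setCK; apply/subsetP => x; rewrite in_setC => xS.
have xv : x != v by apply: contraNneq xS => ->.
apply: comp_v_large => //; apply: leq_trans (implyP (forallP (andP RS).2 x) xS) _.
by apply/subset_leq_card/comp_mono; rewrite ?sub1set.
Qed.

End TypeTstar.

Theorem lemma4p1 (T : finType) (e : rel T) (n g : nat) :
  simple_graph e -> #|T| = n -> 1 <= g -> g <= (n - 3)./2 ->
  is_tree e -> type_Tstar g e ->
  (exists S : {set T}, Rg_cutset g e S) /\ kappa g e = n - 2 * g - 2.
Proof.
move=> [sym_e _] <- _ _ [conn _] [v [a [b [av bv nab [cardA cardB] small]]]].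
have RS0 := Rg_cutset_S0 sym_e av bv nab cardA cardB.
split; first by exists (~: (Defs.comp e [set v] a :|: Defs.comp e [set v] b)).
rewrite -(card_S0 sym_e nab cardA cardB); apply: kappa_min RS0 _ => S RS.
exact: subset_leq_card (S0_sub_Rg_cutset sym_e conn cardA cardB small RS).
Qed.
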